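(* Consider a PWA system, as defined in the context, satisfying (A1)–(A6) with known global dynamical relative degree $\mu=2$. Then its inverse is given by the explicit, anticausal PWA system $x_{k+1}=\overline{\mathbf{A}}_k x_k+\overline{\mathbf{B}}_k y_{k+2}+\overline{\mathbf{F}}_k$, $u_k=\overline{\mathbf{C}}_k x_k+\overline{\mathbf{D}}_k y_{k+2}+\overline{\mathbf{G}}_k$, where $\overline{\mathbf{D}}_k=(C_{k+2}\mathbf{A}_{k+1}\mathbf{B}_k)^{-1}$, $\overline{\mathbf{C}}_k=-\overline{\mathbf{D}}_kC_{k+2}\mathbf{A}_{k+1}\mathbf{A}_k$, $\overline{\mathbf{G}}_k=-\overline{\mathbf{D}}_k(C_{k+2}\mathbf{A}_{k+1}\mathbf{F}_k+C_{k+2}\mathbf{F}_{k+1}+G_{k+2})$, $\overline{\mathbf{A}}_k=\mathbf{A}_k+\mathbf{B}_k\overline{\mathbf{C}}_k$, $\overline{\mathbf{B}}_k=\mathbf{B}_k\overline{\mathbf{D}}_k$, $\overline{\mathbf{F}}_k=\mathbf{F}_k+\mathbf{B}_k\overline{\mathbf{G}}_k$; here the location at time $k+1$ (which determines $\mathbf{A}_{k+1}$ and $\mathbf{F}_{k+1}$) does not depend on $u_k$.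
   Context: A discrete-time piecewise affine (PWA) system is $x_{k+1}=\mathbf{A}_k x_k+\mathbf{B}_k u_k+\mathbf{F}_k$, $y_k=\mathbf{C}_k x_k+\mathbf{D}_k u_k+\mathbf{G}_k$, $k\in\mathbb{Z}$, with state $x_k\in\mathbb{R}^{n_x}$, input $u_k\in\mathbb{R}^{n_u}$, output $y_k\in\mathbb{R}^{n_y}$. For each $M\in\{A,B,F,C,D,G\}$, $\mathbf{M}_k=\sum_{q=1}^{|Q|} M_{q,k}K_q(\delta_k)$, where the $M_{q,k}$ are real matrices (possibly time-varying), $\delta_k=\delta(x_k)=H(Px_k-\theta)$ with $H$ the elementwise Heaviside step function, $P\in\mathbb{R}^{n_P\times n_x}$, $\theta\in\mathbb{R}^{n_P}$, and $K_q(\delta)=1$ if $\delta\in\Delta^*_q$ and $0$ otherwise ($\Delta^*_q$ a set of binary vectors). The locations $Q_q=\{x:\delta(x)\in\Delta^*_q\}$ are disjoint, have union $\mathbb{R}^{n_x}$, and each is a union of disjoint convex polytopes. The $q$-th component model is the affine system with matrices $A_{q,k},\dots,G_{q,k}$ and relative degree $\mu_q$ (number of time steps for an input value to influence the output). Global dynamical relative degree: the smallest integer $\mu\ge 0$ such that the explicit expression of $y_{k+\mu}$ in terms of the component matrices, the selector functions $K_q$, $x_k$ and $u_i$ ($i\ge k$) contains $u_k$ outside of a selector function for every switching sequence on time steps $k,\dots,k+\mu$. Assumptions: (A1) $x_0$ lies in the set of initial conditions from which every location is reachable in finite time; (A2) single-input single-output; (A3) switching depends only on the state, not the input; (A4)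 all component models have the same relative degree $\mu_c$ for all $q$ and $k$; (A5) $\mathbf{C}_k=C_k$, $\mathbf{D}_k=D_k$, $\mathbf{G}_k=G_k$, identical for all locations and known for all $k$; (A6) output-based switching with time-invariant output function: $P=P_o\mathbf{C}_k$ and $\theta=\theta_o-P_o\mathbf{G}_k$ with $\mathbf{C}_k=C$, $\mathbf{G}_k=G$ for all $k$, where $P_o,\theta_o$ contain orientation vectors and offsets of hyperplanes in the output space. The inverse is explicit in that $u_k$ and $x_{k+1}$ are computable directly from $x_k$ and $y_{k+2}$; it is anticausal since $u_k$ depends on the future output $y_{k+2}$. *)

From HB Require Import structures.
From mathcomp Require Import all_boot all_order all_algebra.
Set Implicit Arguments. Unset Strict Implicit. Unset Printing Implicit Defensive.
Import Order.TTheory GRing.Theory Num.Theory.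
Local Open Scope ring_scope.

(* Discrete-time SISO piecewise affine system with |Q| locations,
   state dimension nx, nP switching hyperplanes.  Time k : nat.
   (A2) SISO: input/output dimension 1.
   (A5) C_k, D_k, G_k are common to all locations (built into the data). *)
Record pwa (R : realFieldType) (Q : finType) (nx nP : nat) := PWA {
  pA : Q -> nat -> 'M[R]_nx;
  pB : Q -> nat -> 'M[R]_(nx, 1);
  pF : Q -> nat -> 'cV[R]_nx;
  pC : nat -> 'M[R]_(1, nx);
  pD : nat -> 'M[R]_1;
  pG : nat -> 'cV[R]_1;
  pP : 'M[R]_(nP, nx);
  ptheta : 'cV[R]_nP;
  pDelta : Q -> {set 'cV[bool]_nP}
}.

Section PWA.
Variables (R : realFieldType) (Q : finType) (nx nP : nat) (S : pwa R Q nx nP).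

Definition delta (x : 'cV[R]_nx) : 'cV[bool]_nP :=
  \col_i (0 <= (pP S *m x - ptheta S) i 0).

Definition K (q : Q) (d : 'cV[bool]_nP) : bool := d \in pDelta S q.

Definition bold (a b : nat) (M : Q -> nat -> 'M[R]_(a, b)) (k : nat)
    (x : 'cV[R]_nx) : 'M[R]_(a, b) :=
  \sum_(q : Q) (K q (delta x) : nat)%:R *: M q k.

Definition step (k : nat) (x : 'cV[R]_nx) (u : 'cV[R]_1) : 'cV[R]_nx :=
  bold (pA S) k x *m x + bold (pB S) k x *m u + bold (pF S) k x.

Definition output (k : nat) (x : 'cV[R]_nx) (u : 'cV[R]_1) : 'cV[R]_1 :=
  pC S k *m x + pD S k *m u + pG S k.

Definition is_traj (x : nat -> 'cV[R]_nx) (u y : nat -> 'cV[R]_1) : Prop :=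
  forall k, x k.+1 = step k (x k) (u k) /\ y k = output k (x k) (u k).

Fixpoint traj (x0 : 'cV[R]_nx) (u : nat -> 'cV[R]_1) (k : nat) : 'cV[R]_nx :=
  match k with
  | 0 => x0
  | k'.+1 => step k' (traj x0 u k') (u k')
  end.

Definition locations_partition : Prop :=
  forall x : 'cV[R]_nx, exists! q : Q, K q (delta x).

Definition reaches_all (x0 : 'cV[R]_nx) : Prop :=
  forall q : Q, exists (u : nat -> 'cV[R]_1) (N : nat), K q (delta (traj x0 u N)).

(* Transition along a switching sequence s (s i = location active at time i):
   stt s k j = A_{s(k+j),k+j} ... A_{s(k+1),k+1}  (identity for j = 0). *)
Fixpoint stt (s : nat -> Q) (k j : nat) : 'M[R]_nx :=
  match j with
  | 0 => 1%:M
  | j'.+1 => pA S (s (k + j)) (k + j) *m stt s k j'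
  end.

(* coefficient of u_k in the explicit expression of y_{k+j}, for the
   switching sequence s on time steps k, ..., k+j *)
Definition markov (s : nat -> Q) (k j : nat) : 'M[R]_1 :=
  match j with
  | 0 => pD S k
  | j'.+1 => pC S (k + j) *m stt s k j' *m pB S (s k) k
  end.

Definition comp_reldeg (q : Q) (k mu : nat) : Prop :=
  markov (fun _ => q) k mu != 0 /\
  (forall j, (j < mu)%N -> markov (fun _ => q) k j = 0).

(* global dynamical relative degree: smallest mu such that, for every time k
   and every switching sequence, y_{k+mu} contains u_k (nonzero coefficient) *)
Definition glob_reldeg (mu : nat) : Prop :=
  (forall k (s : nat -> Q), markov s k mu != 0) /\
  (forall j, (j < mu)%N -> ~ (forall k (s : nat -> Q), markov s k j != 0)).

(* u_k-free prediction of x_{k+1}; determines the location at k+1 *)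
Definition xpred (k : nat) (x : 'cV[R]_nx) : 'cV[R]_nx :=
  bold (pA S) k x *m x + bold (pF S) k x.

Definition A1 k x := bold (pA S) k.+1 (xpred k x).
Definition F1 k x := bold (pF S) k.+1 (xpred k x).

Definition CAB k x : 'M[R]_1 := pC S k.+2 *m A1 k x *m bold (pB S) k x.

Definition Dbar k x : 'M[R]_1 := invmx (CAB k x).
Definition Cbar k x : 'M[R]_(1, nx) :=
  - (Dbar k x *m pC S k.+2 *m A1 k x *m bold (pA S) k x).
Definition Gbar k x : 'cV[R]_1 :=
  - (Dbar k x *m (pC S k.+2 *m A1 k x *m bold (pF S) k x
                  + pC S k.+2 *m F1 k x + pG S k.+2)).
Definition Abar k x : 'M[R]_nx := bold (pA S) k x + bold (pB S) k x *m Cbar k x.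
Definition Bbar k x : 'M[R]_(nx, 1) := bold (pB S) k x *m Dbar k x.
Definition Fbar k x : 'cV[R]_nx := bold (pF S) k x + bold (pB S) k x *m Gbar k x.

End PWA.

From HB Require Import structures.
From mathcomp Require Import all_boot all_order all_algebra.
Set Implicit Arguments. Unset Strict Implicit. Unset Printing Implicit Defensive.
Import Order.TTheory GRing.Theory Num.Theory.
Local Open Scope ring_scope.

(* A common component relative degree mu_c equal to 0 or 1 would make u_k
   appear in y_k or y_(k+1) for every switching sequence, contradicting
   mu = 2; hence D_k = 0 and C B_(q,k) = 0 for all q, k.  With output-based
   switching P = P_o C, the location at time k+1 therefore depends on
   C x_(k+1) = C (A_k x_k + F_k) only, not on u_k.  Unrolling two steps,
   y_(k+2) is affine in u_k with coefficient C A_(k+1) B_k, which is the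
   degree-2 Markov parameter of an actual switching sequence and hence a
   nonzero, invertible 1x1 matrix; solving for u_k and substituting into
   the state equation gives the inverse system. *)

Lemma mx11_unitmx (F : fieldType) (M : 'M[F]_1) : (M \in unitmx) = (M != 0).
Proof.
rewrite unitmxE det_mx11 unitfE {2}[M]mx11_scalar -scalemx1 scalemx_eq0.
by rewrite negb_or matrix_nonzero1 andbT.
Qed.

Lemma solve_affine_input (R : comUnitRingType) (m n p : nat)
    (M : 'M[R]_m) (N : 'M[R]_(m, n)) (x : 'M[R]_(n, p)) (u y g : 'M[R]_(m, p)) :
  M \in unitmx -> y = N *m x + M *m u + g ->
  u = - (invmx M *m N) *m x + invmx M *m y - invmx M *m g.
Proof.
move=> Munit ->; rewrite !mulmxDr !mulmxA mulVmx // mul1mx mulNmx.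
by rewrite addrA addKr addrK.
Qed.

Lemma affine_step_feedback (R : pzRingType) (n m p : nat)
    (a : 'M[R]_n) (b : 'M[R]_(n, m)) (f x : 'cV[R]_n) (u : 'cV[R]_m)
    (y : 'cV[R]_p) (Cb : 'M[R]_(m, n)) (Db : 'M[R]_(m, p)) (Gb : 'cV[R]_m) :
  u = Cb *m x + Db *m y + Gb ->
  a *m x + b *m u + f = (a + b *m Cb) *m x + (b *m Db) *m y + (f + b *m Gb).
Proof.
move=> ->; rewrite !mulmxDr !mulmxDl !mulmxA.
by rewrite !addrA [RHS]addrAC.
Qed.

Section PiecewiseAffine.

Variables (R : realFieldType) (Q : finType) (nx nP : nat) (S : pwa R Q nx nP).

Lemma bold_active (a b : nat) (M : Q -> nat -> 'M[R]_(a, b)) k x q :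
  locations_partition S -> K S q (delta S x) -> bold S M k x = M q k.
Proof.
move=> partS qx; rewrite /bold (bigD1 q) //= qx scale1r big1 ?addr0 // => q' q'q.
have [q0 [_ q0_uniq]] := partS x.
case q'x: (K S q' (delta S x)); last by rewrite scale0r.
by move: q'q; rewrite -(q0_uniq _ qx) (q0_uniq _ q'x) eqxx.
Qed.

Lemma bold_delta (a b : nat) (M : Q -> nat -> 'M[R]_(a, b)) k x x' :
  delta S x = delta S x' -> bold S M k x = bold S M k x'.
Proof. by rewrite /bold => ->. Qed.

Lemma mulmx_bold_eq0 (m a b : nat) (N : 'M[R]_(m, a))
    (M : Q -> nat -> 'M[R]_(a, b)) k x :
  (forall q, N *m M q k = 0) -> N *m bold S M k x = 0.
Proof.
by move=> NM0; rewrite /bold mulmx_sumr big1 // => q _; rewrite -scalemxAr NM0 scaler0.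
Qed.

Lemma markov2 s k :
  markov S s k 2 = pC S k.+2 *m pA S (s k.+1) k.+1 *m pB S (s k) k.
Proof.
(* [stt] indexes [s] by a ring-scope sum on [nat], which [addn1] does not see. *)
by rewrite /markov /= mulmx1 -[(k + 1)%R]/(k + 1)%N !addn1 addn2.
Qed.

Lemma comp_reldeg_gt1 mu muc :
  locations_partition S -> (1 < mu)%N -> glob_reldeg S mu ->
  (forall q k, comp_reldeg S q k muc) -> (1 < muc)%N.
Proof.
move=> partS mu_gt1 [_ glob_min] reldeg; have [q0 _] := partS 0.
case: muc reldeg => [|[|//]] reldeg; exfalso.
- by apply: (glob_min 0%N (ltnW mu_gt1)) => k s; exact: (reldeg q0 k).1.
- by apply: (glob_min 1%N mu_gt1) => k s; exact: (reldeg (s k) k).1.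
Qed.

Lemma comp_reldeg_pD q k muc :
  comp_reldeg S q k muc -> (0 < muc)%N -> pD S k = 0.
Proof. by move=> [_ markov_lt] /markov_lt. Qed.

Lemma comp_reldeg_pCpB q k muc :
  comp_reldeg S q k muc -> (1 < muc)%N -> pC S k.+1 *m pB S q k = 0.
Proof. by move=> [_ markov_lt] /markov_lt; rewrite /markov /= mulmx1 addn1. Qed.

Lemma delta_step_xpred (m : nat) (C : 'M[R]_(m, nx)) (Po : 'M[R]_(nP, m)) k x v :
  pP S = Po *m C -> (forall q, C *m pB S q k = 0) ->
  delta S (step S k x v) = delta S (xpred S k x).
Proof.
move=> PE CB0.
have CstepE : C *m step S k x v = C *m xpred S k x.
  rewrite /step /xpred addrAC !mulmxDr [C *m (_ *m v)]mulmxA.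
  by rewrite (mulmx_bold_eq0 _ CB0) mul0mx addr0.
by rewrite /delta PE -!mulmxA CstepE.
Qed.

Lemma traj_output_ahead2 x u y k :
  is_traj S x u y -> pD S k.+2 = 0 -> (forall q, pC S k.+2 *m pB S q k.+1 = 0) ->
  delta S (x k.+1) = delta S (xpred S k (x k)) ->
  y k.+2 = pC S k.+2 *m A1 S k (x k) *m bold S (pA S) k (x k) *m x k
           + CAB S k (x k) *m u k
           + (pC S k.+2 *m A1 S k (x k) *m bold S (pF S) k (x k)
              + pC S k.+2 *m F1 S k (x k) + pG S k.+2).
Proof.
move=> traj D0 CB0 deltaE.
rewrite (traj k.+2).2 /output D0 mul0mx addr0 (traj k.+1).1 /step.
rewrite (bold_delta (pA S) _ deltaE) (bold_delta (pF S) _ deltaE).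
rewrite -/(A1 S k (x k)) -/(F1 S k (x k)) !mulmxDr [_ *m (_ *m u _)]mulmxA.
rewrite (mulmx_bold_eq0 _ CB0) mul0mx addr0 (traj k).1 /step /CAB.
by rewrite !mulmxDr !mulmxA !addrA.
Qed.

Lemma CAB_neq0 k x :
  locations_partition S -> (forall s, markov S s k 2 != 0) -> CAB S k x != 0.
Proof.
move=> partS markov2_neq0.
have [q1 [q1x _]] := partS x; have [q2 [q2x _]] := partS (xpred S k x).
have := markov2_neq0 (fun i => if i == k then q1 else q2).
rewrite markov2 /= eqxx (gtn_eqF (ltnSn k)).
by rewrite /CAB /A1 (bold_active _ _ partS q2x) (bold_active _ _ partS q1x).
Qed.

End PiecewiseAffine.

Theorem corollary2 (R : realFieldType) (Q : finType) (nx nP : nat)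
    (S : pwa R Q nx nP) (x0 : 'cV[R]_nx)
    (C : 'M[R]_(1, nx)) (G : 'cV[R]_1) (Po : 'M[R]_(nP, 1)) (thetao : 'cV[R]_nP) :
  locations_partition S ->
  (* (A1) *) reaches_all S x0 ->
  (* (A4) *) (exists muc : nat, forall (q : Q) (k : nat), comp_reldeg S q k muc) ->
  (* (A6) *) (forall k, pC S k = C) -> (forall k, pG S k = G) ->
  pP S = Po *m C -> ptheta S = thetao - Po *m G ->
  (* known global dynamical relative degree 2 *)
  glob_reldeg S 2 ->
  (* the location at time k+1 does not depend on u_k *)
  (forall (k : nat) (x : 'cV[R]_nx) (v : 'cV[R]_1),
      delta S (step S k x v) = delta S (xpred S k x)) /\
  (* the inverse system reproduces input and state from x_k and y_{k+2} *)
  (forall (x : nat -> 'cV[R]_nx) (u y : nat -> 'cV[R]_1),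
      x 0%N = x0 -> is_traj S x u y ->
      forall k : nat,
        CAB S k (x k) \in unitmx /\
        u k = Cbar S k (x k) *m x k + Dbar S k (x k) *m y k.+2 + Gbar S k (x k) /\
        x k.+1 = Abar S k (x k) *m x k + Bbar S k (x k) *m y k.+2 + Fbar S k (x k)).
Proof.
move=> partS _ [muc reldeg] pCE _ pPE _ glob2; have [q0 _] := partS 0.
have muc_gt1 := comp_reldeg_gt1 partS (ltnSn 1) glob2 reldeg.
have D0 k : pD S k = 0 by apply: comp_reldeg_pD (reldeg q0 k) (ltnW muc_gt1).
have CB0 q k : C *m pB S q k = 0.
  by rewrite -(pCE k.+1); apply: comp_reldeg_pCpB (reldeg q k) muc_gt1.
have deltaE k x v : delta S (step S k x v) = delta S (xpred S k x).
  exact: delta_step_xpred pPE (CB0^~ k).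
split=> // x u y _ traj k.
have CAB_unit : CAB S k (x k) \in unitmx.
  by rewrite mx11_unitmx CAB_neq0 // => s; apply: glob2.1.
have CB0_next q : pC S k.+2 *m pB S q k.+1 = 0 by rewrite pCE.
have delta_next : delta S (x k.+1) = delta S (xpred S k (x k)) by rewrite (traj k).1.
have yE := traj_output_ahead2 traj (D0 _) CB0_next delta_next.
have uE : u k = Cbar S k (x k) *m x k + Dbar S k (x k) *m y k.+2 + Gbar S k (x k).
  by rewrite (solve_affine_input CAB_unit yE) /Cbar /Dbar /Gbar !mulmxA.
by split=> //; split=> //; rewrite (traj k).1 /step; apply: affine_step_feedback.
Qed.
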